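(* Let $\mathbb{K}$ be a field, $m\ge 3$, $R=\mathbb{K}[T_1,\dots,T_m]$, $S=R[X_1,\dots,X_m,W]$, and let $a_1,\dots,a_m,b_1,\dots,b_m$ be integers with $0\le b_i<a_i$ for all $i$ and $b_i\ne0$ for at least two $i$. Let $\mathcal{H}_0\subset S$ be the ideal generated by $\Gamma_0=\{\mathcal{P}(X_i,X_j)\mid 1\le j<i\le m+1\}$. Then $\operatorname{depth}(S/\operatorname{in}(\mathcal{H}_0))\ge m+1$, where $\operatorname{in}$ is taken with respect to $\tau$.
   Context: Write $\mathbf{T}^{\mathbf{b}}=T_1^{b_1}\cdots T_m^{b_m}$ and $X_{m+1}:=W$. Let $\Psi:S\to R$ be the $R$-algebra map $X_i\mapsto T_i^{a_i}$ ($1\le i\le m$), $W\mapsto\mathbf{T}^{\mathbf{b}}$. For monomials $M,N$ in $X_1,\dots,X_m,W$, with $g=\gcd(\Psi(M),\Psi(N))$, set $\mathcal{P}(M,N)=\frac{\Psi(N)}{g}M-\frac{\Psi(M)}{g}N$. (Thus $\mathcal{H}_0=L_1S$, the ideal generated by the linear part of the defining ideal of the Rees algebra of $I=\langle T_1^{a_1},\dots,T_m^{a_m},\mathbf{T}^{\mathbf{b}}\rangle$.) The order $\tau$ is lex on $S$ with $W>X_m>\cdots>X_1>T_1>\cdots>T_m$. *)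

From HB Require Import structures.
From mathcomp Require Import all_boot all_order all_algebra.
From mathcomp Require Import mpoly.

Set Implicit Arguments.
Unset Strict Implicit.
Unset Printing Implicit Defensive.

Import Order.TTheory GRing.Theory.
Local Open Scope ring_scope.

Section Defs.

Variable A : comNzRingType.

Definition ideal_gen (G : A -> Prop) : A -> Prop :=
  fun f => exists s : seq (A * A),
      (forall p, p \in s -> G p.2) /\ f = \sum_(p <- s) p.1 * p.2.

Definition ideal_add (J : A -> Prop) (fs : seq A) : A -> Prop :=
  ideal_gen (fun g => J g \/ g \in fs).

Definition regular_seq (J : A -> Prop) (fs : seq A) : Prop :=
  (forall i, (i < size fs)%N -> forall g : A,
       ideal_add J (take i fs) (nth 0 fs i * g) -> ideal_add J (take i fs) g)
  /\ ~ ideal_add J fs 1.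

End Defs.

Section Poly.
Variable K : fieldType.
Variable n : nat.
Local Notation S := {mpoly K[n]}.

(* homogeneous maximal ideal (X_1,...,X_n): zero constant term *)
Definition max_homog (f : S) : bool := f@_0%MM == 0.

Definition depth_ge (J : S -> Prop) (d : nat) : Prop :=
  exists fs : seq S, size fs = d /\ (forall f, f \in fs -> max_homog f)
                     /\ regular_seq J fs.

(* lexicographic order on monomials, w.r.t. a priority list of variables
   (first element = biggest variable) *)
Fixpoint lex_le (pr : seq 'I_n) (u v : 'X_{1..n}) : bool :=
  match pr with
  | [::] => true
  | k :: r => if (u k < v k)%N then true
              else if u k == v k then lex_le r u v else false
  end.

Definition is_lead_mon (pr : seq 'I_n) (f : S) (u : 'X_{1..n}) : Prop :=
  u \in msupp f /\ forall v, v \in msupp f -> lex_le pr v u.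

Definition initial_ideal (pr : seq 'I_n) (I : S -> Prop) : S -> Prop :=
  ideal_gen (fun g => exists f u, I f /\ f != 0 /\ is_lead_mon pr f u /\ g = 'X_[u]).

End Poly.

(* Variables of S = K[T_1..T_m][X_1..X_m, W] are indexed by 'I_(m + m.+1):
   T_i (i = 1..m)  is  lshift m.+1 (i-1),
   X_k (k = 1..m)  is  rshift m (k-1),   W = X_{m+1} is rshift m ord_max. *)
Section Setting.
Variable K : fieldType.
Variable m : nat.
Local Notation nv := (m + m.+1)%N.
Local Notation S := {mpoly K[nv]}.

Definition varT (i : 'I_m) : 'I_nv := lshift m.+1 i.
Definition varX (k : 'I_m.+1) : 'I_nv := rshift m k.

(* order tau: lex with W > X_m > ... > X_1 > T_1 > ... > T_m *)
Definition tau_pr : seq 'I_nv :=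
  map varX (rev (enum 'I_m.+1)) ++ map varT (enum 'I_m).

Definition Tmon (e : 'I_m -> nat) : 'X_{1..nv} :=
  [multinom (match split t with inl i => e i | inr _ => 0%N end) | t < nv].

(* exponent vector (in the T's) of Psi(X_k): Psi(X_k) = T_k^{a_k} for k <= m,
   Psi(W) = T^b *)
Definition psiE (a b : 'I_m -> nat) (k : 'I_m.+1) (i : 'I_m) : nat :=
  if (k : nat) == m then b i else if (k : nat) == (i : nat) then a i else 0%N.

(* P(X_k, X_l) = Psi(X_l)/g * X_k - Psi(X_k)/g * X_l, g = gcd(Psi X_k, Psi X_l) *)
Definition Pgen (a b : 'I_m -> nat) (k l : 'I_m.+1) : S :=
  let g := fun i => minn (psiE a b k i) (psiE a b l i) in
  'X_[Tmon (fun i => (psiE a b l i - g i)%N)] * 'X_(varX k)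
  - 'X_[Tmon (fun i => (psiE a b k i - g i)%N)] * 'X_(varX l).

Definition Gamma0 (a b : 'I_m -> nat) : S -> Prop :=
  fun f => exists i j : 'I_m.+1, (j < i)%N /\ f = Pgen a b i j.

Definition H0 (a b : 'I_m -> nat) : S -> Prop := ideal_gen (Gamma0 a b).

End Setting.

From HB Require Import structures.
From mathcomp Require Import all_boot all_order all_algebra.
From mathcomp Require Import mpoly.
From mathcomp Require Import zify ring.
From Stdlib Require Import Relations ClassicalEpsilon.

Set Implicit Arguments.
Unset Strict Implicit.
Unset Printing Implicit Defensive.

Import GRing.Theory.
Local Open Scope ring_scope.

(* The binomials P(X_i, X_j), j < i, are a Groebner basis of H_0 for tau.
   Rewriting a monomial by replacing a divisor X^(lmon i j) (the leading term)
   with X^(tmon i j) is lex-decreasing and every critical pair closes in one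
   step (this is where b_i < a_i enters), so by Church-Rosser an irreducible
   monomial is the only irreducible one in its class.  The functional summing
   the coefficients over a class kills H_0, hence every leading monomial of
   H_0 is divisible by some lmon i j, and in(H_0) is the monomial ideal M they
   generate.
   Modulo T_1 - X_2, ..., T_s - X_(s+1) the ring S/M becomes S/M_s, where M_s
   is M with X_(k+1) := T_k substituted for k <= s.  A binomial y - z is a
   nonzerodivisor modulo a monomial ideal I with (I : y) meets (I : z) in I,
   and this holds for y = T_(s+1), z = X_(s+2) and I = M_s; finally X_1 does
   not occur in the generators of M_m, and 1 is not in M_m + (X_1). *)

(** * Lexicographic order and abstract rewriting *)

Section Lex.
Variable n : nat.
Implicit Types (x y z w : 'X_{1..n}) (pr : seq 'I_n).

Lemma lex_le_refl pr x : lex_le pr x x.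
Proof. by elim: pr => //= k pr IH; rewrite ltnn eqxx. Qed.

Lemma lex_le_trans pr x y z : lex_le pr x y -> lex_le pr y z -> lex_le pr x z.
Proof.
elim: pr => //= k pr IH.
case: (ltngtP (x k) (y k)) => Hxy; case: (ltngtP (y k) (z k)) => Hyz //=.
- by rewrite (ltn_trans Hxy Hyz).
- by rewrite -Hyz Hxy.
- by rewrite Hxy Hyz.
- by rewrite Hxy Hyz ltnn eqxx; apply: IH.
Qed.

Lemma lex_le_add2l pr w x y : lex_le pr (w + x)%MM (w + y)%MM = lex_le pr x y.
Proof. by elim: pr => //= k pr IH; rewrite !mnmDE ltn_add2l eqn_add2l IH. Qed.

Lemma lex_le_anti pr x y : lex_le pr x y -> lex_le pr y x -> {in pr, x =1 y}.
Proof.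
elim: pr => //= k pr IH.
case: (ltngtP (x k) (y k)) => Exy //= Hxy Hyx t.
by rewrite inE => /orP [/eqP -> //|]; apply: IH.
Qed.

Lemma lex_le_first_lt pr x y k : k \in pr -> (x k < y k)%N ->
  (forall t, (index t pr < index k pr)%N -> x t = y t) -> lex_le pr x y.
Proof.
elim: pr => //= h pr IH; rewrite inE => Hk Hlt Heq.
have [<-|Hne] := eqVneq k h; first by rewrite Hlt.
have Ehk : (h == k) = false by rewrite eq_sym; apply/negbTE.
have -> : x h = y h by apply: Heq => /=; rewrite eqxx Ehk.
rewrite ltnn eqxx; apply: IH => //; first by move: Hk; rewrite (negbTE Hne).
by move=> t Ht; apply: Heq => /=; rewrite Ehk; case: (h == t).
Qed.

End Lex.

Section Confluence.
Variables (T : Type) (R : relation T).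
Local Notation "x ->* y" := (clos_refl_trans _ R x y) (at level 70).
Local Notation "x ->? y" := (clos_refl _ R x y) (at level 70).
#[local] Arguments rt_trans {A R x y z}.

Lemma clos_r_rt x y : x ->? y -> x ->* y.
Proof. by case=> [z|]; [apply: rt_step | apply: rt_refl]. Qed.

Hypothesis diamond : forall x y1 y2, R x y1 -> R x y2 ->
  exists z, y1 ->? z /\ y2 ->? z.

Lemma rt_strip x y2 : x ->* y2 -> forall y1, R x y1 ->
  exists z, y1 ->* z /\ y2 ->? z.
Proof.
elim=> [x0 y H y1 H1|x0 y1 H1|x0 w y _ IHw Hwy IHy y1 H1].
- by have [z [H1z Hz]] := diamond H1 H; exists z; split; first exact: clos_r_rt H1z.
- by exists y1; split; [apply: rt_refl | apply: r_step].
- have [z1 [H1z1 Hwz1]] := IHw _ H1.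
  case: Hwz1 H1z1 => [z1' Hwz1|] H1z1.
    have [z [Hz1 Hyz]] := IHy _ Hwz1.
    by exists z; split => //; apply: rt_trans H1z1 Hz1.
  by exists y; split; [apply: rt_trans H1z1 Hwy | apply: r_refl].
Qed.

Lemma rt_confluence x y1 y2 : x ->* y1 -> x ->* y2 -> exists z, y1 ->* z /\ y2 ->* z.
Proof.
move=> H; elim: H y2 => [x0 y H y2 H2|x0 y2 H2|x0 w y _ IHw _ IHy y2 H2].
- have [z [H2z Hz]] := rt_strip H2 H.
  by exists z; split => //; apply: clos_r_rt.
- by exists y2; split; [exact: H2 | apply: rt_refl].
- have [z1 [Hwz1 H2z1]] := IHw _ H2.
  have [z [Hyz Hz1z]] := IHy _ Hwz1.
  by exists z; split => //; apply: rt_trans H2z1 Hz1z.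
Qed.

Lemma church_rosser x y : clos_refl_sym_trans _ R x y -> exists z, x ->* z /\ y ->* z.
Proof.
elim=> [x0 y0 H|x0|x0 y0 _ [z [H1 H2]]|x0 w y0 _ [u [H1 H2]] _ [v [H3 H4]]].
- by exists y0; split; [apply: rt_step | apply: rt_refl].
- by exists x0; split; apply: rt_refl.
- by exists z.
- have [z [Huz Hvz]] := rt_confluence H2 H3.
  by exists z; split; [apply: rt_trans H1 Huz | apply: rt_trans H4 Hvz].
Qed.

Lemma rt_normal x y : (forall z, ~ R x z) -> x ->* y -> y = x.
Proof.
move=> Hx /clos_rt_rt1n_iff H; case: H Hx => // y0 z0 H _ Hx.
by case: (Hx _ H).
Qed.

End Confluence.

(** * Ideals and monomial ideals *)

Section IdealGen.
Variable A : comNzRingType.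
Implicit Types (G : A -> Prop) (f g q : A).

Lemma ideal_gen_mem G g : G g -> ideal_gen G g.
Proof.
move=> Gg; exists [:: (1, g)]; split; last by rewrite big_seq1 mul1r.
by move=> p; rewrite inE => /eqP ->.
Qed.

Lemma ideal_gen0 G : ideal_gen G 0.
Proof. by exists [::]; rewrite big_nil. Qed.

Lemma ideal_genD G f g : ideal_gen G f -> ideal_gen G g -> ideal_gen G (f + g).
Proof.
case=> s1 [H1 ->] [s2 [H2 ->]]; exists (s1 ++ s2); split; last by rewrite big_cat.
by move=> p; rewrite mem_cat => /orP [/H1|/H2].
Qed.

Lemma ideal_genMl G q f : ideal_gen G f -> ideal_gen G (q * f).
Proof.
case=> s [H ->]; exists [seq (q * p.1, p.2) | p <- s]; split.
  by move=> p /mapP [p' Hp' ->] /=; apply: H.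
by rewrite big_map mulr_sumr; apply: eq_bigr => p _; rewrite mulrA.
Qed.

Lemma ideal_genN G f : ideal_gen G f -> ideal_gen G (- f).
Proof. by rewrite -mulN1r; apply: ideal_genMl. Qed.

Lemma ideal_genB G f g : ideal_gen G f -> ideal_gen G g -> ideal_gen G (f - g).
Proof. by move=> Gf Gg; apply: ideal_genD Gf (ideal_genN Gg). Qed.

Lemma ideal_gen_sum G (I : eqType) (r : seq I) (F : I -> A) :
  (forall i, i \in r -> ideal_gen G (F i)) -> ideal_gen G (\sum_(i <- r) F i).
Proof.
elim: r => [|i r IH] H; first by rewrite big_nil; apply: ideal_gen0.
rewrite big_cons; apply: ideal_genD; first by apply: H; rewrite mem_head.
by apply: IH => j Hj; apply: H; rewrite inE Hj orbT.
Qed.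

Lemma ideal_gen_ind G (P : A -> Prop) : P 0 ->
  (forall f g, P f -> P g -> P (f + g)) -> (forall q g, G g -> P (q * g)) ->
  forall f, ideal_gen G f -> P f.
Proof.
move=> P0 PD PM f [s [H ->]]; elim: s H => [|p s IH] H; first by rewrite big_nil.
rewrite big_cons; apply: PD; first by apply/PM/H; rewrite mem_head.
by apply: IH => p' Hp'; apply: H; rewrite inE Hp' orbT.
Qed.

Lemma ideal_gen_sub G G' : (forall g, G g -> ideal_gen G' g) ->
  forall f, ideal_gen G f -> ideal_gen G' f.
Proof.
move=> GG'; apply: ideal_gen_ind; first exact: ideal_gen0.
  by move=> f g; apply: ideal_genD.
by move=> q g /GG'; apply: ideal_genMl.
Qed.

End IdealGen.

Section MonomialIdeal.
Variables (K : fieldType) (n : nat).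
Local Notation S := {mpoly K[n]}.
Local Notation MN := 'X_{1..n}.
Implicit Types (V : pred MN) (p q h : S) (x y : MN).

Definition upward V := forall x y, V x -> (x <= y)%MM -> V y.

(* For upward-closed [V], [monideal V] is the monomial ideal spanned by [V]. *)
Definition monideal V p := forall x, x \in msupp p -> V x.

Lemma lem_addU x y (v : 'I_n) : (y <= x + U_(v))%MM ->
  (y <= x)%MM \/ y v = (x v).+1.
Proof.
move=> /mnm_lepP yx; have [yv|yv] := ltnP (x v) (y v).
  by right; move: (yx v); rewrite mnmDE mnm1E eqxx addn1; lia.
left; apply/mnm_lepP => c; move: (yx c); rewrite mnmDE mnm1E.
by case: eqP => [<-|_] //; rewrite addn0.
Qed.

Lemma monideal0 V : monideal V 0.
Proof. by move=> x; rewrite msupp0. Qed.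

Lemma monidealD V p q : monideal V p -> monideal V q -> monideal V (p + q).
Proof. by move=> Vp Vq x /msuppD_le; rewrite mem_cat => /orP [/Vp|/Vq]. Qed.

Lemma monidealMl V p q : upward V -> monideal V q -> monideal V (p * q).
Proof.
move=> Vup Vq x /msuppM_le /allpairsP [[x1 x2] [_ /Vq Vx2 ->]] /=.
exact: Vup Vx2 (lem_addl _ _).
Qed.

Lemma monideal_rmorph (A : comNzRingType) (phi : {rmorphism A -> S}) V
    (G : A -> Prop) f :
  upward V -> (forall g, G g -> monideal V (phi g)) ->
  ideal_gen G f -> monideal V (phi f).
Proof.
move=> Vup VG; move: f; apply: ideal_gen_ind.
- by rewrite rmorph0; apply: monideal0.
- by move=> f g Vf Vg; rewrite rmorphD; apply: monidealD.
- by move=> q g Gg; rewrite rmorphM; apply/monidealMl/VG.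
Qed.

Lemma sub_comp_mpoly_ideal (G : S -> Prop) (lq : n.-tuple S) :
  (forall i, ideal_gen G ('X_i - tnth lq i)) ->
  forall p, ideal_gen G (p - comp_mpoly lq p).
Proof.
move=> GX; pose P p := ideal_gen G (p - comp_mpoly lq p).
have P0 : P 0 by rewrite /P comp_mpoly0 subrr; apply: ideal_gen0.
have P1 : P 1 by rewrite /P comp_mpoly1 subrr; apply: ideal_gen0.
have PD p q : P p -> P q -> P (p + q).
  move=> Pp Pq; rewrite /P comp_mpolyD.
  have -> : p + q - (comp_mpoly lq p + comp_mpoly lq q) =
            (p - comp_mpoly lq p) + (q - comp_mpoly lq q) by ring.
  exact: ideal_genD.
have PM p q : P p -> P q -> P (p * q).
  move=> Pp Pq; rewrite /P rmorphM.
  have -> : p * q - comp_mpoly lq p * comp_mpoly lq q =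
            q * (p - comp_mpoly lq p) + comp_mpoly lq p * (q - comp_mpoly lq q).
    by ring.
  by apply: ideal_genD; apply: ideal_genMl.
have PX x : P 'X_[x].
  rewrite mpolyXE_id; apply: (big_ind P) => // i _.
  elim: (x i) => [|k IH]; rewrite ?expr0 // exprS; apply: PM => //.
  by rewrite /P comp_mpolyXU -tnth_nth.
elim/mpolyind => [//|c x p _ _ Pp]; apply: PD => //.
rewrite -mul_mpolyC; apply: PM => //.
by rewrite /P comp_mpolyC subrr; apply: ideal_gen0.
Qed.

End MonomialIdeal.

Section Rename.
Variables (K : fieldType) (n : nat) (g : 'I_n -> 'I_n).
Local Notation S := {mpoly K[n]}.
Local Notation MN := 'X_{1..n}.
Implicit Types (x y : MN).

Definition rename_tuple : n.-tuple S := [tuple 'X_(g v) | v < n].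
Definition mnm_rename x : MN := (\sum_(v < n) U_(g v) *+ x v)%MM.

Lemma mnm_renameE x c : mnm_rename x c = (\sum_(v < n) (g v == c) * x v)%N.
Proof. by rewrite mnm_sumE; apply: eq_bigr => v _; rewrite mulmnE mnm1E. Qed.

Lemma mnm_renameD x y : mnm_rename (x + y) = (mnm_rename x + mnm_rename y)%MM.
Proof.
apply/mnmP => c; rewrite mnmDE !mnm_renameE -big_split /=.
by apply: eq_bigr => v _; rewrite mnmDE mulnDr.
Qed.

Lemma mnm_renameU v : mnm_rename U_(v) = U_(g v)%MM.
Proof.
apply/mnmP => c; rewrite mnm_renameE mnm1E (bigD1 v) //= mnm1E eqxx muln1.
by rewrite big1 ?addn0 // => w Hw; rewrite mnm1E [v == w]eq_sym (negbTE Hw) muln0.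
Qed.

Lemma mnm_rename_le x y : (x <= y)%MM -> (mnm_rename x <= mnm_rename y)%MM.
Proof. by move=> Hxy; rewrite -(submK Hxy) mnm_renameD lem_addl. Qed.

Lemma comp_renameX x : comp_mpoly rename_tuple 'X_[x] = 'X_[mnm_rename x] :> S.
Proof.
rewrite comp_mpolyX /mnm_rename -mprodXnE; apply: eq_bigr => v _.
by rewrite tnth_mktuple.
Qed.

Lemma comp_renameXU v : comp_mpoly rename_tuple 'X_v = 'X_(g v) :> S.
Proof. by rewrite comp_renameX mnm_renameU. Qed.

End Rename.

Section NonZeroDivisors.
Variables (K : fieldType) (n : nat).
Local Notation S := {mpoly K[n]}.
Local Notation MN := 'X_{1..n}.
Implicit Types (V : pred MN) (h : S) (x mu : MN).

Lemma mcoeffXM_addU (v : 'I_n) h x : ('X_v * h)@_(x + U_(v)) = h@_x.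
Proof. by rewrite mulrC addmC mcoeffMX. Qed.

Lemma mcoeffXM_eq0 (v : 'I_n) h mu : mu v = 0%N -> ('X_v * h)@_mu = 0.
Proof.
move=> mu0; apply/memN_msupp_eq0; rewrite mulrC (perm_mem (msuppMX h _)).
by apply/mapP => -[x _ Emu]; move: mu0; rewrite Emu mnmDE mnm1E eqxx.
Qed.

Lemma mnm_subUK (v : 'I_n) mu : (0 < mu v)%N -> (mu - U_(v) + U_(v))%MM = mu.
Proof. by move=> Hv; apply: submK; apply/mnm_lepP => c; rewrite mnm1E; case: eqP => [<-|]. Qed.

Lemma monideal_cancelX V (v : 'I_n) h : upward V ->
  (forall x, V (x + U_(v))%MM -> V x) -> monideal V ('X_v * h) -> monideal V h.
Proof.
move=> Vup Vv Vh x Hx; apply/Vv/Vh.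
by rewrite mcoeff_msupp mcoeffXM_addU -mcoeff_msupp.
Qed.

(* (I : X_y) meets (I : X_z) in I, for the monomial ideal I spanned by V. *)
Definition colon_meet V (y z : 'I_n) :=
  forall x, V (x + U_(y))%MM -> V (x + U_(z))%MM -> V x.

Section Binomial.
Variables (V : pred MN) (y z : 'I_n) (h : S).
Hypotheses (Vup : upward V) (yz : y != z) (Vyz : colon_meet V y z).
Hypothesis Vh : monideal V (('X_y - 'X_z) * h).

Let zy : (z == y) = false. Proof. by rewrite eq_sym; apply/negbTE. Qed.

Ltac mnm_lia := first [apply/mnmP | apply/mnm_lepP]; let c := fresh "c" in
  move=> c; rewrite ?(mnmDE, mnmBE, mulmnE, mnm1E);
  case: (eqVneq y c) => [<-|_]; [rewrite ?zy | case: (eqVneq z c) => [<-|_]];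
  rewrite /=; lia.

Lemma colon_meet_pow p q x :
  V (x + U_(y) *+ p)%MM -> V (x + U_(z) *+ q)%MM -> V x.
Proof.
elim: p q x => [|p IHp] q x; first by rewrite mulm0n addm0.
elim: q x => [|q IHq] x Vp; first by rewrite mulm0n addm0.
move=> Vq; apply: (IHp q.+1) => //.
have VxZ : V (x + U_(z))%MM.
  by apply: IHq; [apply: Vup Vp _ | apply: Vup Vq _]; mnm_lia.
by apply: Vyz; [apply: Vup Vp _ | apply: Vup VxZ _]; mnm_lia.
Qed.

Lemma mcoeff_binomialM_out mu : ~~ V mu -> ('X_y * h)@_mu = ('X_z * h)@_mu.
Proof.
move=> Vmu; apply/eqP; rewrite -subr_eq0 -mcoeffB -mulrBl mcoeff_eq0.
by apply: contra Vmu => /Vh.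
Qed.

Lemma binomial_out_reach_y x : ~~ V x -> h@_x != 0 ->
  exists k, V (x + U_(y) *+ k)%MM.
Proof.
move Ee: (x z) => e; elim: e x Ee => [|e IH] x Exz Vx hx;
  have [Vxy|Vxy] := boolP (V (x + U_(y))%MM); try by exists 1%N.
  have Exyz : (x + U_(y))%MM z = 0%N by rewrite mnmDE mnm1E (negbTE yz) Exz.
  case/negP: hx; rewrite -(mcoeffXM_addU y) mcoeff_binomialM_out //.
  by rewrite mcoeffXM_eq0.
pose x1 := (x + U_(y) - U_(z))%MM.
have Ex1 : (x1 + U_(z))%MM = (x + U_(y))%MM.
  by apply: mnm_subUK; rewrite mnmDE mnm1E (negbTE yz) Exz.
have x1z : x1 z = e by rewrite /x1 mnmBE mnmDE !mnm1E (negbTE yz) eqxx Exz; lia.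
have Vx1 : ~~ V x1.
  by apply: contra Vxy => Vx1; apply: Vup Vx1 _; rewrite -Ex1 lem_addr.
have hx1 : h@_x1 != 0.
  by rewrite -(mcoeffXM_addU z) Ex1 -mcoeff_binomialM_out // mcoeffXM_addU.
have [k Vk] := IH x1 x1z Vx1 hx1.
by exists k.+1; apply: Vup Vk _; rewrite /x1; mnm_lia.
Qed.

Lemma binomial_out_coeff0 k x : ~~ V x -> V (x + U_(y) *+ k)%MM -> h@_x = 0.
Proof.
move Ed: (x y) => d; elim: d x k Ed => [|d IH] x k Exy Vx Vk;
  have Vxz : ~~ V (x + U_(z))%MM by apply: contra Vx => Vxz;
    apply: (colon_meet_pow (q := 1)) Vk _; rewrite mulm1n.
  have Exzy : (x + U_(z))%MM y = 0%N by rewrite mnmDE mnm1E zy Exy.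
  by rewrite -(mcoeffXM_addU z) -mcoeff_binomialM_out // mcoeffXM_eq0.
pose x1 := (x + U_(z) - U_(y))%MM.
have Ex1 : (x1 + U_(y))%MM = (x + U_(z))%MM.
  by apply: mnm_subUK; rewrite mnmDE mnm1E zy Exy.
rewrite -(mcoeffXM_addU z) -mcoeff_binomialM_out // -Ex1 mcoeffXM_addU.
apply: (IH x1 k.+1).
- by rewrite /x1 mnmBE mnmDE !mnm1E zy eqxx Exy; lia.
- by apply: contra Vxz => Vx1; apply: Vup Vx1 _; rewrite -Ex1 lem_addr.
- by apply: Vup Vk _; rewrite /x1; mnm_lia.
Qed.

End Binomial.

Lemma monideal_cancel_binomial V (y z : 'I_n) h : upward V -> y != z ->
  colon_meet V y z -> monideal V (('X_y - 'X_z) * h) -> monideal V h.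
Proof.
move=> Vup yz Vyz Vh x; rewrite mcoeff_msupp => hx; apply/idPn => Vx.
have [k Vk] := binomial_out_reach_y Vup yz Vh Vx hx.
by rewrite (binomial_out_coeff0 Vup yz Vyz Vh Vx Vk) eqxx in hx.
Qed.

End NonZeroDivisors.

Section CoefficientFunctional.
Variables (K : fieldType) (n : nat) (F : 'X_{1..n} -> K).
Local Notation S := {mpoly K[n]}.
Local Notation MN := 'X_{1..n}.
Implicit Types (p q : S).

Definition mcoef_sum p : K := \sum_(x <- msupp p) p@_x * F x.

Lemma mcoef_sum_sub p (s : seq MN) : uniq s -> {subset msupp p <= s} ->
  mcoef_sum p = \sum_(x <- s) p@_x * F x.
Proof.
move=> us ps; rewrite [RHS](bigID (mem (msupp p))) /= [X in _ + X]big1 ?addr0.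
  rewrite -big_filter; apply/perm_big/uniq_perm; rewrite ?filter_uniq ?msupp_uniq //.
  by move=> x; rewrite mem_filter andb_idr //; apply: ps.
by move=> x /memN_msupp_eq0 ->; rewrite mul0r.
Qed.

Lemma mcoef_sumD p q : mcoef_sum (p + q) = mcoef_sum p + mcoef_sum q.
Proof.
pose s := undup (msupp p ++ msupp q); have us : uniq s := undup_uniq _.
have sp : {subset msupp p <= s} by move=> x px; rewrite mem_undup mem_cat px.
have sq : {subset msupp q <= s} by move=> x qx; rewrite mem_undup mem_cat qx orbT.
have spq : {subset msupp (p + q) <= s} by move=> x /msuppD_le; rewrite mem_undup.
rewrite !(@mcoef_sum_sub _ s) // -big_split.
by apply: eq_bigr => x _; rewrite mcoeffD mulrDl.
Qed.

Lemma mcoef_sumN p : mcoef_sum (- p) = - mcoef_sum p.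
Proof.
rewrite /mcoef_sum (perm_big _ (msuppN p)) -sumrN.
by apply: eq_bigr => x _; rewrite mcoeffN mulNr.
Qed.

Lemma mcoef_sumMX p (x : MN) :
  mcoef_sum (p * 'X_[x]) = \sum_(y <- msupp p) p@_y * F (x + y)%MM.
Proof.
rewrite /mcoef_sum (perm_big _ (msuppMX p x)) big_map.
by apply: eq_bigr => y _; rewrite mcoeffMX.
Qed.

Lemma mcoef_sum_binomial_ideal (G : S -> Prop) p :
  (forall g, G g -> exists L R, g = 'X_[L] - 'X_[R] /\
     forall x : MN, F (L + x)%MM = F (R + x)%MM) ->
  ideal_gen G p -> mcoef_sum p = 0.
Proof.
move=> GLR; move: p; apply: (ideal_gen_ind (P := fun p => mcoef_sum p = 0)).
- by rewrite /mcoef_sum msupp0 big_nil.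
- by move=> p q /= Hp Hq; rewrite mcoef_sumD Hp Hq addr0.
move=> q g /GLR [L [R [-> FLR]]].
rewrite mulrBr mcoef_sumD mcoef_sumN !mcoef_sumMX.
by rewrite -sumrB big1 // => x _; rewrite FLR subrr.
Qed.

End CoefficientFunctional.

(** * The Groebner basis Gamma_0 of H_0 *)

Section Coordinates.
Variable m : nat.
Local Notation nv := (m + m.+1)%N.
Local Notation MN := 'X_{1..nv}.
Implicit Types (t u : 'I_m) (k l : 'I_m.+1) (e : 'I_m -> nat).

Lemma eq_varTX (t : 'I_m) (k : 'I_m.+1) : (varT t == varX k) = false.
Proof. exact: eq_lrshift. Qed.

Lemma eq_varXT (k : 'I_m.+1) (t : 'I_m) : (varX k == varT t) = false.
Proof. by rewrite eq_sym eq_varTX. Qed.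

Lemma eq_varTT (t u : 'I_m) : (varT t == varT u) = (t == u).
Proof. exact: eq_shift.1.1.1. Qed.

Lemma eq_varXX (k l : 'I_m.+1) : (varX k == varX l) = (k == l).
Proof. exact: eq_shift.1.1.2. Qed.

Lemma varTX_ind (P : 'I_nv -> Prop) :
  (forall t, P (varT t)) -> (forall k, P (varX k)) -> forall v, P v.
Proof.
move=> PT PX v; case: (splitP v) => [t Et|k Ek].
  by have -> : v = varT t by apply: val_inj.
by have -> : v = varX k by apply: val_inj.
Qed.

Lemma mnm_eqTX (x y : MN) : (forall t, x (varT t) = y (varT t)) ->
  (forall k, x (varX k) = y (varX k)) -> x = y.
Proof. by move=> HT HX; apply/mnmP; apply: varTX_ind. Qed.

Lemma mnm_leTX (x y : MN) : (forall t, x (varT t) <= y (varT t))%N ->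
  (forall k, x (varX k) <= y (varX k))%N -> (x <= y)%MM.
Proof. by move=> HT HX; apply/mnm_lepP; apply: varTX_ind. Qed.

Lemma Tmon_varT e t : Tmon e (varT t) = e t.
Proof. by rewrite mnmE /varT -/(unsplit (inl t)) unsplitK. Qed.

Lemma Tmon_varX e k : Tmon e (varX k) = 0%N.
Proof. by rewrite mnmE /varX -/(unsplit (inr k)) unsplitK. Qed.

Lemma index_tau_varX k : index (varX k) (tau_pr m) = (m - k)%N.
Proof.
have Hidx : index k (rev (enum 'I_m.+1)) = (m - k)%N.
  have Hs : (m - k < size (rev (enum 'I_m.+1)))%N.
    by rewrite size_rev size_enum_ord; lia.
  have := index_uniq ord0 Hs (etrans (rev_uniq _) (enum_uniq _)).
  rewrite nth_rev; last by rewrite size_rev in Hs.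
  rewrite size_enum_ord.
  have -> : (m.+1 - (m - k).+1)%N = k by have := ltn_ord k; lia.
  by rewrite nth_ord_enum.
rewrite /tau_pr index_cat mem_map; last exact: rshift_inj.
by rewrite mem_rev mem_enum /= index_map //; exact: rshift_inj.
Qed.

Lemma index_tau_varT t : (m < index (varT t) (tau_pr m))%N.
Proof.
rewrite /tau_pr index_cat.
have -> : (varT t \in map (@varX m) (rev (enum 'I_m.+1))) = false.
  by apply/negbTE/mapP => -[k _ /eqP]; rewrite eq_varTX.
by rewrite size_map size_rev size_enum_ord; lia.
Qed.

Lemma mem_tau_pr v : v \in tau_pr m.
Proof.
apply: (@varTX_ind (fun v => v \in tau_pr m)) => [t|k]; rewrite mem_cat.
  by rewrite orbC (mem_map (@lshift_inj _ _)) mem_enum.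
by rewrite (mem_map (@rshift_inj _ _)) mem_rev mem_enum.
Qed.

Lemma lex_tau_varX (x y : MN) k : (x (varX k) < y (varX k))%N ->
  (forall l, (k < l)%N -> x (varX l) = y (varX l)) -> lex_le (tau_pr m) x y.
Proof.
move=> Hk Hl; apply: (lex_le_first_lt (mem_tau_pr _) Hk).
apply: varTX_ind => [t|l]; rewrite index_tau_varX => H.
  by have := index_tau_varT t; have := leq_subr k m; lia.
by apply: Hl; move: H; rewrite index_tau_varX; have := ltn_ord l; have := ltn_ord k; lia.
Qed.

End Coordinates.

Section Generators.
Variables (K : fieldType) (m : nat) (a b : 'I_m -> nat).
Hypothesis ba : forall t, (b t < a t)%N.
Local Notation nv := (m + m.+1)%N.
Local Notation S := {mpoly K[nv]}.
Local Notation MN := 'X_{1..nv}.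
Implicit Types (t u : 'I_m) (i j k l : 'I_m.+1) (x y : MN).

Definition gcdE i j t := minn (psiE a b i t) (psiE a b j t).

Definition lmon i j : MN :=
  (Tmon (fun t => psiE a b j t - gcdE i j t)%N + U_(varX i))%MM.
Definition tmon i j : MN :=
  (Tmon (fun t => psiE a b i t - gcdE i j t)%N + U_(varX j))%MM.

Lemma lmonT i j t : lmon i j (varT t) = (psiE a b j t - gcdE i j t)%N.
Proof. by rewrite mnmDE Tmon_varT mnm1E eq_varXT addn0. Qed.
Lemma lmonX i j k : lmon i j (varX k) = (i == k :> nat).
Proof. by rewrite mnmDE Tmon_varX mnm1E eq_varXX. Qed.
Lemma tmonT i j t : tmon i j (varT t) = (psiE a b i t - gcdE i j t)%N.
Proof. by rewrite mnmDE Tmon_varT mnm1E eq_varXT addn0. Qed.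
Lemma tmonX i j k : tmon i j (varX k) = (j == k :> nat).
Proof. by rewrite mnmDE Tmon_varX mnm1E eq_varXX. Qed.

Lemma Pgen_lmon i j : Pgen K a b i j = 'X_[lmon i j] - 'X_[tmon i j].
Proof. by rewrite /Pgen /lmon /tmon !mpolyXD. Qed.

Lemma lex_tmon_lmon i j : (j < i)%N -> lex_le (tau_pr m) (tmon i j) (lmon i j).
Proof.
move=> ji; apply: (@lex_tau_varX _ _ _ i) => [|l il]; rewrite tmonX lmonX.
  by rewrite eqxx; case: eqP => // Eji; rewrite Eji ltnn in ji.
by rewrite (ltn_eqF il) (ltn_eqF (ltn_trans ji il)).
Qed.

Lemma lmonT_eq0 i j t : (j < i)%N -> (j : nat) <> t -> lmon i j (varT t) = 0%N.
Proof.
move=> ji jt; rewrite lmonT /gcdE /psiE.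
have -> : ((j : nat) == m) = false by apply/eqP; have := ltn_ord i; lia.
by have -> : ((j : nat) == t) = false by apply/eqP.
Qed.

Lemma lmon_disjoint i j i' j' : (j < i)%N -> (j' < i')%N ->
  i != i' -> j != j' -> forall v, lmon i j v = 0%N \/ lmon i' j' v = 0%N.
Proof.
move=> ji ji' ii' jj'; apply: varTX_ind => [t|k].
  have [Ejt|Ejt] := eqVneq (j : nat) t; last by left; apply: lmonT_eq0 => //; apply/eqP.
  right; apply: lmonT_eq0 => // Ej't; case/negP: jj'; apply/eqP/ord_inj; lia.
rewrite !lmonX; have [Eik|] := eqVneq (i : nat) k; last by left.
by right; apply/eqP; rewrite eqb0; apply: contra ii' => /eqP Ei'k; apply/eqP/ord_inj; lia.
Qed.

Lemma lmonT_lt i j t : (j < i)%N -> lmon i j (varT t) =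
  if j == t :> nat then (a t - (if i == m :> nat then b t else 0))%N else 0%N.
Proof.
move=> ji; have := ltn_ord i; have := ba t; rewrite lmonT /gcdE /psiE.
by repeat case: eqP => ?; lia.
Qed.

Lemma tmonT_lt i j t : (j < i)%N -> tmon i j (varT t) =
  if i == m :> nat then (if j == t :> nat then 0 else b t)%N
  else (if i == t :> nat then a t else 0)%N.
Proof.
move=> ji; have := ltn_ord i; have := ba t; rewrite tmonT /gcdE /psiE.
by repeat case: eqP => ?; lia.
Qed.

Definition reduce i j x := (x - lmon i j + tmon i j)%MM.

Definition reduces x y := exists i j, [/\ (j < i)%N, (lmon i j <= x)%MM & y = reduce i j x].

Lemma reduceE i j x v : reduce i j x v = (x v - lmon i j v + tmon i j v)%N.
Proof. by rewrite mnmDE mnmBE. Qed.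

Lemma reduce_lmon i j x : reduce i j (x + lmon i j) = (x + tmon i j)%MM.
Proof. by rewrite /reduce addmK. Qed.

Lemma reduces_lmon i j x : (j < i)%N -> reduces (x + lmon i j) (x + tmon i j).
Proof. by move=> ji; exists i, j; split; rewrite ?lem_addl ?reduce_lmon. Qed.

Lemma reduces_lex x y : reduces x y -> lex_le (tau_pr m) y x.
Proof.
case=> i [j [ji Hx ->]]; rewrite /reduce -{2}(submK Hx) lex_le_add2l.
exact: lex_tmon_lmon.
Qed.

Lemma reduces_rt_lex x y : clos_refl_trans _ reduces x y -> lex_le (tau_pr m) y x.
Proof.
elim=> [x0 y0 /reduces_lex //|x0|x0 y0 z0 _ Hxy _ Hyz]; first exact: lex_le_refl.
exact: lex_le_trans Hyz Hxy.
Qed.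

Ltac case_lia := repeat (case: eqP => ? /=; try (exfalso; lia)); lia.
Ltac expsT_lia eqs := rewrite ?reduceE ?lmonT_lt ?tmonT_lt // ?eqs /=; case_lia.
Ltac expsX_lia := rewrite ?reduceE ?lmonX ?tmonX /=; case_lia.

Lemma reduces_same_lead i j j' x : (j' < j)%N -> (j < i)%N ->
  (lmon i j <= x)%MM -> (lmon i j' <= x)%MM ->
  reduces (reduce i j x) (reduce i j' x).
Proof.
move=> j'j ji /mnm_lepP Hx /mnm_lepP Hx'; have j'i := ltn_trans j'j ji.
have [jm j'm] : (j == m :> nat) = false /\ (j' == m :> nat) = false.
  by split; apply: ltn_eqF; have := ltn_ord i; lia.
exists j, j'; split => //.
  apply: mnm_leTX => [t|k];
    [move: (Hx (varT t)) (Hx' (varT t)) (ba t) | move: (Hx (varX k))].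
    by expsT_lia (jm, j'm).
  by expsX_lia.
apply: mnm_eqTX => [t|k];
  [move: (Hx (varT t)) (Hx' (varT t)) (ba t) | move: (Hx (varX k))].
  by expsT_lia (jm, j'm).
by expsX_lia.
Qed.

Lemma reduces_same_trail i i' j x : (j < i')%N -> (i' < i)%N ->
  (lmon i j <= x)%MM -> (lmon i' j <= x)%MM ->
  reduces (reduce i' j x) (reduce i j x).
Proof.
move=> ji' i'i /mnm_lepP Hx /mnm_lepP Hx'.
have [jm i'm] : (j == m :> nat) = false /\ (i' == m :> nat) = false.
  by split; apply: ltn_eqF; have := ltn_ord i; lia.
exists i, i'; split => //.
  apply: mnm_leTX => [t|k];
    [move: (Hx (varT t)) (Hx' (varT t)) (ba t) | move: (Hx (varX k)) (Hx' (varX k))].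
    by expsT_lia (jm, i'm).
  by expsX_lia.
apply: mnm_eqTX => [t|k];
  [move: (Hx (varT t)) (Hx' (varT t)) (ba t) | move: (Hx (varX k)) (Hx' (varX k))].
  by expsT_lia (jm, i'm).
by expsX_lia.
Qed.

Lemma reduce_disjoint i j i' j' x : (j < i)%N -> (j' < i')%N ->
  i != i' -> j != j' -> (lmon i j <= x)%MM -> (lmon i' j' <= x)%MM ->
  (lmon i' j' <= reduce i j x)%MM /\
  reduce i' j' (reduce i j x) = reduce i j (reduce i' j' x).
Proof.
move=> ji ji' ii' jj' /mnm_lepP Hx /mnm_lepP Hx'.
have disj := lmon_disjoint ji ji' ii' jj'.
split; [apply/mnm_lepP | apply/mnmP] => v; move: (disj v) (Hx v) (Hx' v);
  rewrite !reduceE; lia.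
Qed.

Lemma reduces_diamond x y1 y2 : reduces x y1 -> reduces x y2 ->
  exists z, clos_refl _ reduces y1 z /\ clos_refl _ reduces y2 z.
Proof.
case=> i [j [ji Hx ->]] [i' [j' [ji' Hx' ->]]].
have [Eii'|ii'] := eqVneq i i'.
  subst i'.
  have [j'j|jj'|/ord_inj Ejj'] := ltngtP j' j.
  - exists (reduce i j' x); split; last exact: r_refl.
    by apply: r_step; exact: (reduces_same_lead j'j ji Hx Hx').
  - exists (reduce i j x); split; first exact: r_refl.
    by apply: r_step; exact: (reduces_same_lead jj' ji' Hx' Hx).
  - by subst j'; exists (reduce i j x); split; apply: r_refl.
have [Ejj'|jj'] := eqVneq j j'.
  subst j'.
  have [i'i|ii'l|/ord_inj Ei'i] := ltngtP i' i.
  - exists (reduce i j x); split; first exact: r_refl.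
    by apply: r_step; exact: (reduces_same_trail ji' i'i Hx Hx').
  - exists (reduce i' j x); split; last exact: r_refl.
    by apply: r_step; exact: (reduces_same_trail ji ii'l Hx' Hx).
  - by rewrite Ei'i eqxx in ii'.
have i'i : i' != i by rewrite eq_sym.
have j'j : j' != j by rewrite eq_sym.
have [H1 E1] := reduce_disjoint ji ji' ii' jj' Hx Hx'.
have [H2 _] := reduce_disjoint ji' ji i'i j'j Hx' Hx.
exists (reduce i' j' (reduce i j x)); split; apply: r_step; first by exists i', j'.
by rewrite E1; exists i, j.
Qed.

End Generators.

Section InitialIdeal.
Variables (K : fieldType) (m : nat) (a b : 'I_m -> nat).
Hypothesis ba : forall t, (b t < a t)%N.
Local Notation nv := (m + m.+1)%N.
Local Notation S := {mpoly K[nv]}.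
Local Notation MN := 'X_{1..nv}.
Local Notation lmon := (lmon a b).
Local Notation tmon := (tmon a b).
Local Notation reduces := (reduces a b).
Local Notation J := (initial_ideal (tau_pr m) (@H0 K m a b)).
Implicit Types (i j : 'I_m.+1) (f : S) (u x : MN).

Definition class_ind u x : K :=
  if excluded_middle_informative (clos_refl_sym_trans _ reduces x u) then 1 else 0.

Lemma class_ind_lmon u i j x : (j < i)%N ->
  class_ind u (lmon i j + x)%MM = class_ind u (tmon i j + x)%MM.
Proof.
move=> ji; have Hs := reduces_lmon a b x ji; rewrite ![(_ + x)%MM]addmC /class_ind.
case: excluded_middle_informative => H1; case: excluded_middle_informative => H2 //.
- by case: H2; apply: rst_trans (rst_sym _ _ _ _ (rst_step _ _ _ _ Hs)) H1.
- by case: H1; apply: rst_trans (rst_step _ _ _ _ Hs) H2.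
Qed.

Lemma H0_lead_mon f u : H0 a b f -> is_lead_mon (tau_pr m) f u ->
  exists i j, (j < i)%N /\ (lmon i j <= u)%MM.
Proof.
move=> H0f [fu ulead]; apply: NNPP => Nred.
have u_normal z : ~ reduces u z by case=> i [j [ji Hu _]]; apply: Nred; exists i, j.
have : mcoef_sum (class_ind u) f = 0.
  apply: mcoef_sum_binomial_ideal H0f => g [i [j [ji ->]]].
  by exists (lmon i j), (tmon i j); rewrite Pgen_lmon; split => // x; apply: class_ind_lmon.
rewrite /mcoef_sum (bigD1_seq u) ?msupp_uniq //= big1_seq => [|x /andP [xu xf]].
  rewrite addr0 /class_ind.
  case: excluded_middle_informative => [Huu|Nuu] /=.
    by rewrite mulr1 => /eqP; rewrite mcoeff_eq0 fu.
  by case: Nuu; apply: rst_refl.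
(* A monomial x of f in the class of the normal form u reduces to u, so x >= u >= x. *)
rewrite /class_ind; case: excluded_middle_informative => [xu_conv|_] /=; last by rewrite mulr0.
have [z [xz uz]] := church_rosser (reduces_diamond ba) xu_conv.
move: xz; rewrite (rt_normal u_normal uz) => /reduces_rt_lex ux.
have Exu : x = u by apply/mnmP => v; apply: lex_le_anti (ulead x xf) ux _ (mem_tau_pr v).
by rewrite Exu eqxx in xu.
Qed.

Lemma lmon_in_initial i j : (j < i)%N -> J 'X_[lmon i j].
Proof.
move=> ji; apply: ideal_gen_mem; exists (Pgen K a b i j), (lmon i j).
have lt : lmon i j != tmon i j.
  apply/eqP => /mnmP /(_ (varX i)); rewrite lmonX tmonX eqxx.
  by case: eqP => // Eji; rewrite Eji ltnn in ji.
have coef1 : (Pgen K a b i j)@_(lmon i j) = 1.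
  by rewrite Pgen_lmon mcoeffB !mcoeffX eqxx eq_sym (negbTE lt) subr0.
split; first by apply: ideal_gen_mem; exists i, j.
split.
  by apply/eqP => P0; move: coef1; rewrite P0 mcoeff0 => /eqP; rewrite eq_sym oner_eq0.
split=> //; split; first by rewrite mcoeff_msupp coef1 oner_neq0.
move=> v; rewrite Pgen_lmon => /msuppB_le; rewrite !msuppX mem_cat !inE.
case/orP => /eqP ->; first exact: lex_le_refl.
exact: (lex_tmon_lmon a b ji).
Qed.

End InitialIdeal.

(** * The regular sequence *)

Section Stages.
Variables (K : fieldType) (m : nat) (a b : 'I_m -> nat).
Hypothesis ba : forall t, (b t < a t)%N.
Local Notation nv := (m + m.+1)%N.
Local Notation S := {mpoly K[nv]}.
Local Notation MN := 'X_{1..nv}.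
Local Notation lmon := (lmon a b).
Local Notation J := (initial_ideal (tau_pr m) (@H0 K m a b)).
Implicit Types (s : nat) (t u : 'I_m) (i j k : 'I_m.+1) (f g : S) (x : MN).

(* Sends X_(t+1) to T_t for t < s (0-based indices) and fixes the other variables. *)
Definition stage_varX s k : 'I_nv :=
  if unlift ord0 k is Some t then (if (t < s)%N then varT t else varX k) else varX k.

Definition stage s (v : 'I_nv) : 'I_nv :=
  if split v is inr k then stage_varX s k else v.

Local Notation sigma s := (comp_mpoly (rename_tuple K (stage s))).

Lemma stageT s t : stage s (varT t) = varT t.
Proof. by rewrite /stage /varT -/(unsplit (inl t)) unsplitK. Qed.

Lemma stageX s k : stage s (varX k) = stage_varX s k.
Proof. by rewrite /stage /varX -/(unsplit (inr k)) unsplitK. Qed.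

Lemma stage_varX_lift s t :
  stage_varX s (lift ord0 t) = if (t < s)%N then varT t else varX (lift ord0 t).
Proof. by rewrite /stage_varX liftK. Qed.

Lemma stage_varX0 s : stage_varX s ord0 = varX ord0.
Proof. by rewrite /stage_varX unlift_none. Qed.

Lemma rename_stage_Tmon s e : mnm_rename (stage s) (Tmon e) = Tmon e.
Proof.
apply/mnmP => c; rewrite mnm_renameE.
rewrite (eq_bigr (fun v => (v == c) * Tmon e v)%N); last first.
  by apply: varTX_ind => [t|k] _; rewrite ?stageT // !Tmon_varX !muln0.
by rewrite (bigD1 c) //= eqxx mul1n big1 ?addn0 // => v /negbTE ->.
Qed.

Definition stage_lmon s i j : MN := mnm_rename (stage s) (lmon i j).

Lemma stage_lmonE s i j :
  stage_lmon s i j =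
  (Tmon (fun t => psiE a b j t - gcdE a b i j t)%N + U_(stage_varX s i))%MM.
Proof. by rewrite /stage_lmon mnm_renameD rename_stage_Tmon mnm_renameU stageX. Qed.

Lemma stage_lmonT s i j t :
  stage_lmon s i j (varT t) = (lmon i j (varT t) + (stage_varX s i == varT t))%N.
Proof. by rewrite stage_lmonE mnmDE Tmon_varT lmonT mnm1E. Qed.

Lemma stage_lmonX s i j k : stage_lmon s i j (varX k) = (stage_varX s i == varX k).
Proof. by rewrite stage_lmonE mnmDE Tmon_varX mnm1E. Qed.

Definition stage_lead s : pred MN := fun x =>
  [exists i : 'I_m.+1, exists j : 'I_m.+1, (j < i)%N && (stage_lmon s i j <= x)%MM].

Lemma stage_leadP s x :
  reflect (exists i j, (j < i)%N /\ (stage_lmon s i j <= x)%MM) (stage_lead s x).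
Proof.
apply: (iffP existsP) => [[i /existsP [j /andP [ji Hx]]]|[i [j [ji Hx]]]].
  by exists i, j.
by exists i; apply/existsP; exists j; rewrite ji.
Qed.

Lemma stage_lead_up s : upward (stage_lead s).
Proof.
move=> x y /stage_leadP [i [j [ji Hx]]] xy; apply/stage_leadP; exists i, j.
by split=> //; apply: lepm_trans Hx xy.
Qed.

Lemma initial_stage s f : J f -> monideal (stage_lead s) (sigma s f).
Proof.
apply: monideal_rmorph (@stage_lead_up s) _ => _ [g [u [H0g [_ [gu ->]]]]].
rewrite [X in monideal _ X]/= comp_renameX => x; rewrite msuppX inE => /eqP ->.
have [i [j [ji ju]]] := H0_lead_mon ba H0g gu.
by apply/stage_leadP; exists i, j; split => //; apply: mnm_rename_le.
Qed.

Definition ell t : S := 'X_(varT t) - 'X_(varX (lift ord0 t)).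

(* In the paper's indexing: T_1 - X_2, ..., T_m - X_(m+1), X_1. *)
Definition regseq : seq S := [seq ell t | t <- enum 'I_m] ++ [:: 'X_(varX ord0)].

Lemma sigma_ell s t : sigma s (ell t) = if (t < s)%N then 0 else ell t.
Proof.
rewrite /ell comp_mpolyB !comp_renameXU stageT stageX stage_varX_lift.
by case: ifP; rewrite ?subrr.
Qed.

Lemma take_regseq s : (s <= m)%N -> take s regseq = [seq ell t | t <- take s (enum 'I_m)].
Proof.
move=> sm; rewrite /regseq take_cat size_map size_enum_ord map_take.
case: ltnP => // ms; have -> : s = m by apply/eqP; rewrite eqn_leq sm.
by rewrite subnn take0 cats0 take_oversize // size_map size_enum_ord.
Qed.

Lemma mem_take_regseq s g : (s <= m)%N -> g \in take s regseq ->
  exists2 t : 'I_m, (t < s)%N & g = ell t.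
Proof.
move=> sm; rewrite take_regseq // => /mapP [t ts ->]; exists t => //.
by have := index_ltn ts; rewrite index_enum_ord.
Qed.

Lemma ell_in_take s t : (s <= m)%N -> (t < s)%N -> ell t \in take s regseq.
Proof.
move=> sm ts; rewrite take_regseq //; apply: map_f.
by rewrite in_take_leq ?size_enum_ord // index_enum_ord.
Qed.

Lemma sub_sigma_ideal_add s f : (s <= m)%N ->
  ideal_add J (take s regseq) (f - sigma s f).
Proof.
move=> sm; apply: (@ideal_gen_sub _ (fun g => g \in take s regseq)).
  by move=> g sg; apply: ideal_gen_mem; right.
apply: sub_comp_mpoly_ideal => v; rewrite tnth_mktuple.
elim/varTX_ind: v => [t|k]; first by rewrite stageT subrr; apply: ideal_gen0.
rewrite stageX; case: (unliftP ord0 k) => [t ->|->]; last first.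
  by rewrite stage_varX0 subrr; apply: ideal_gen0.
rewrite stage_varX_lift; case: ifP => ts; last by rewrite subrr; apply: ideal_gen0.
by rewrite -opprB; apply/ideal_genN/ideal_gen_mem/ell_in_take.
Qed.

Lemma ideal_add_stageP s f : (s <= m)%N ->
  ideal_add J (take s regseq) f <-> monideal (stage_lead s) (sigma s f).
Proof.
move=> sm; split.
  apply: monideal_rmorph (@stage_lead_up s) _ => g [Jg|/mem_take_regseq [//|t ts ->]].
    exact: initial_stage.
  by rewrite [X in monideal _ X]/= sigma_ell ts; apply: monideal0.
move=> Vf; rewrite -(subrK (sigma s f) f).
apply: ideal_genD; first exact: sub_sigma_ideal_add.
rewrite (mpolyE (sigma s f)); apply: ideal_gen_sum => mu /Vf /stage_leadP [i [j [ji Hmu]]].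
rewrite -(submK Hmu) mpolyXD -comp_renameX -mul_mpolyC mulrA; apply: ideal_genMl.
have -> : sigma s 'X_[lmon i j] = 'X_[lmon i j] - ('X_[lmon i j] - sigma s 'X_[lmon i j]).
  by rewrite opprB addrC subrK.
apply: ideal_genB.
  by apply: ideal_gen_mem; left; apply: lmon_in_initial.
exact: sub_sigma_ideal_add.
Qed.

Lemma stage_varX_eqT s i u : stage_varX s i = varT u -> i = lift ord0 u /\ (u < s)%N.
Proof.
case: (unliftP ord0 i) => [t ->|->]; rewrite ?stage_varX0 ?stage_varX_lift.
  by case: ifP => ts /eqP; rewrite ?eq_varTT ?eq_varXT // => /eqP <-.
by move/eqP; rewrite eq_varXT.
Qed.

Lemma stage_varX_eqX s i k : stage_varX s i = varX k -> i = k.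
Proof.
case: (unliftP ord0 i) => [t ->|->]; rewrite ?stage_varX0 ?stage_varX_lift.
  by case: ifP => _ /eqP; rewrite ?eq_varTX ?eq_varXX // => /eqP.
by move/eqP; rewrite eq_varXX => /eqP.
Qed.

Lemma stage_varX_gt s i : (s < i)%N -> stage_varX s i = varX i.
Proof.
case: (unliftP ord0 i) => [t ->|->] //; rewrite stage_varX_lift /= /bump leq0n add1n ltnS.
by move=> st; rewrite ltnNge st.
Qed.

Lemma lmonT_anti u i i' j : (j < i)%N -> (i <= i')%N ->
  (lmon i' j (varT u) <= lmon i j (varT u))%N.
Proof.
move=> ji ii'; rewrite !lmonT_lt ?(leq_trans ji ii') //; have := ltn_ord i'.
by repeat case: eqP => ? //; lia.
Qed.

Lemma stage_lead_colon t : colon_meet (stage_lead t) (varT t) (varX (lift ord0 t)).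
Proof.
move=> x /stage_leadP [i1 [j1 [ji1 L1]]] /stage_leadP [i2 [j2 [ji2 L2]]].
have [L1x|E1] := lem_addU L1; first by apply/stage_leadP; exists i1, j1.
have [L2x|E2] := lem_addU L2; first by apply/stage_leadP; exists i2, j2.
have Ej1 : (j1 : nat) = t.
  move: E1; rewrite stage_lmonT.
  case: eqP => [/stage_varX_eqT [_]|_]; first by rewrite ltnn.
  by apply: contra_eq => /eqP j1t; rewrite lmonT_eq0.
have Ei2 : i2 = lift ord0 t.
  by move: E2; rewrite stage_lmonX; case: eqP => // /stage_varX_eqX.
have i2i1 : (i2 <= i1)%N by rewrite Ei2 /= /bump leq0n add1n -Ej1.
apply/stage_leadP; exists i1, j2; split; first exact: leq_trans ji2 i2i1.
apply/mnm_lepP; apply: varTX_ind => [c|k].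
  rewrite stage_lmonT stage_varX_gt ?eq_varXT ?addn0; last by rewrite -Ej1.
  apply: (leq_trans (lmonT_anti c ji2 i2i1)).
  move/mnm_lepP: L2 => /(_ (varT c)).
  by rewrite stage_lmonT mnmDE mnm1E eq_varXT !addn0; lia.
by move/mnm_lepP: L1 => /(_ (varX k)); rewrite !stage_lmonX mnmDE mnm1E eq_varTX addn0.
Qed.

Lemma stage_lead_cancel0 x : stage_lead m (x + U_(varX ord0))%MM -> stage_lead m x.
Proof.
move=> /stage_leadP [i [j [ji L]]]; have [Lx|] := lem_addU L.
  by apply/stage_leadP; exists i, j.
rewrite stage_lmonX; case: eqP => // /stage_varX_eqX Ei.
by rewrite Ei ltn0 in ji.
Qed.

Lemma ell_regular t g :
  ideal_add J (take t regseq) (ell t * g) -> ideal_add J (take t regseq) g.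
Proof.
have tm : (t <= m)%N := ltnW (ltn_ord t).
rewrite !(ideal_add_stageP _ tm) rmorphM [X in monideal _ X]/= sigma_ell ltnn => Vg.
apply: monideal_cancel_binomial Vg; first exact: stage_lead_up.
  by rewrite eq_varTX.
exact: stage_lead_colon.
Qed.

Lemma X0_regular g : ideal_add J (take m regseq) ('X_(varX ord0) * g) ->
  ideal_add J (take m regseq) g.
Proof.
rewrite !(ideal_add_stageP _ (leqnn m)) rmorphM [X in monideal _ X]/=.
rewrite comp_renameXU stageX stage_varX0 => Vg.
by apply: monideal_cancelX Vg; [exact: stage_lead_up | exact: stage_lead_cancel0].
Qed.

Lemma stage_lead0 s : ~~ stage_lead s 0%MM.
Proof.
apply/stage_leadP => -[i [j [_ /mnm_lepP /(_ (stage_varX s i))]]].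
by rewrite stage_lmonE mnmDE mnm1E eqxx mnm0E addn1.
Qed.

Lemma one_notin_ideal_add : ~ ideal_add J regseq 1.
Proof.
pose V : pred MN := fun x => stage_lead m x || (0 < x (varX ord0))%N.
have Vup : upward V.
  move=> x y /orP [Vx|x0] xy; apply/orP; first by left; apply: stage_lead_up Vx xy.
  by right; move/mnm_lepP: xy => /(_ (varX ord0)); lia.
have VJ g : J g \/ g \in regseq -> monideal V (sigma m g).
  case=> [Jg x /(initial_stage Jg) Vx|]; first by apply/orP; left.
  rewrite mem_cat => /orP [/mapP [t _ ->]|].
    by rewrite sigma_ell ltn_ord; apply: monideal0.
  rewrite inE => /eqP ->; rewrite comp_renameXU stageX stage_varX0 => x.
  by rewrite msuppX inE => /eqP ->; apply/orP; right; rewrite mnm1E eqxx.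
move=> /(monideal_rmorph Vup VJ); rewrite [X in monideal _ X]/= comp_mpoly1 => /(_ 0%MM).
by rewrite msupp1 mem_head /V mnm0E orbF (negbTE (stage_lead0 m)) => /(_ isT).
Qed.

Lemma size_regseq : size regseq = m.+1.
Proof. by rewrite size_cat size_map size_enum_ord addn1. Qed.

Lemma nth_regseq_ell t : nth 0 regseq t = ell t.
Proof.
by rewrite nth_cat size_map size_enum_ord ltn_ord (nth_map t) ?nth_ord_enum ?size_enum_ord.
Qed.

Lemma nth_regseq_last : nth 0 regseq m = 'X_(varX ord0).
Proof. by rewrite nth_cat size_map size_enum_ord ltnn subnn. Qed.

Lemma regseq_regular : regular_seq J regseq.
Proof.
split; last exact: one_notin_ideal_add.
move=> i; rewrite size_regseq ltnS leq_eqVlt => /orP [/eqP ->|im] g.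
  by rewrite nth_regseq_last; apply: X0_regular.
by rewrite -[i]/(Ordinal im : nat) nth_regseq_ell; apply: ell_regular.
Qed.

Lemma regseq_max_homog f : f \in regseq -> max_homog f.
Proof.
have U0 v : (U_(v)%MM == 0%MM :> MN) = false.
  by apply/eqP => /mnmP /(_ v); rewrite mnm1E eqxx mnm0E.
rewrite /max_homog mem_cat => /orP [/mapP [t _ ->]|].
  by rewrite /ell mcoeffB !mcoeffX !U0 subr0.
by rewrite inE => /eqP ->; rewrite mcoeffX U0.
Qed.

End Stages.

Theorem proposition3p4 (K : fieldType) (m : nat) (a b : 'I_m -> nat) :
  (3 <= m)%N ->
  (forall i, (b i < a i)%N) ->
  (exists i j : 'I_m, i != j /\ b i != 0%N /\ b j != 0%N) ->
  depth_ge (@initial_ideal K _ (@tau_pr m) (@H0 K m a b)) m.+1.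
Proof.
move=> _ ba _; exists (regseq K m); split; first exact: size_regseq.
by split; [exact: regseq_max_homog | exact: regseq_regular].
Qed.
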